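(* For every input permutation, at every step of algorithm $\mathcal{D}^2\mathcal{I}$ we have $Top(D_2)<Top(I)$ (a statement about an empty stack being considered true).
   Context: The $\mathfrak{D}^2\mathfrak{I}$ machine consists of two decreasing stacks $D_1,D_2$ followed in series by an increasing stack $I$. Elements of $D_1,D_2$ must be in decreasing order from top to bottom (top largest); elements of $I$ in increasing order from top to bottom (top smallest). Operations: $d_0$ pushes the next input element (called $Input$) into $D_1$; $d_1$ moves $Top(D_1)$ to $D_2$; $d_2$ moves $Top(D_2)$ to $I$; $d_3$ pops $Top(I)$ and appends it to the output. Any comparison involving an empty stack is considered true. Conditions: ($\alpha$) $Top(D_2)<Top(I)$; ($\beta$) $Top(D_2)<Top(D_1)$ and $Top(D_1)<Top(I)$; ($\gamma$) $Top(D_1)<Input$, $Input<Top(I)$, and the sequence of input elements from $Input$ up to the first input element larger than $Top(D_2)$ is increasing. Algorithm $\mathcal{D}^2\mathcal{I}$ repeatedly executes the first applicable instruction among: 1. if $Top(I)$ is the next element to be output (the smallest element not yet output), perform $d_3$; 2. if the elements contained in $D_1\cup D_2$ are exactly the next elements to be output, move them to the output in increasing order; 3. perform $d_1$ if it is legal and ($\beta$) holds; 4. perform $d_0$ if it is legal and ($\gamma$) holds; 5. perform $d_2$ if it is legal and ($\alpha$) holds; 6. otherwise perform $d_3$. *)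

From mathcomp Require Import all_boot.
Set Implicit Arguments. Unset Strict Implicit. Unset Printing Implicit Defensive.

(* Stacks are sequences whose head is the top element.  The input is a
   sequence whose head is the next input element [Input]. *)
Record state := St {
  inp  : seq nat;
  d1   : seq nat;
  d2   : seq nat;
  istk : seq nat;
  outp : seq nat    (* output produced so far, in order *)
}.

Definition topS (s : seq nat) : option nat := ohead s.

(* strict comparison; any comparison involving an empty stack is true *)
Definition ltT (a b : option nat) : bool :=
  match a, b with Some x, Some y => x < y | _, _ => true end.

Definition remaining (st : state) : seq nat :=
  inp st ++ d1 st ++ d2 st ++ istk st.

(* Top(I) is the next element to be output (smallest not yet output) *)
Definition rule1 (st : state) : bool :=
  if istk st is t :: _ then all (fun y => t <= y) (remaining st) else false.

(* the (nonempty) contents of D1 u D2 are exactly the next elements to be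
   output, i.e. all smaller than every other element not yet output *)
Definition rule2 (st : state) : bool :=
  (d1 st ++ d2 st != [::]) &&
  all (fun x => all (fun y => x < y) (inp st ++ istk st)) (d1 st ++ d2 st).

(* legality: D1, D2 decreasing top to bottom (top largest), I increasing
   top to bottom (top smallest) *)
Definition legal_d0 (st : state) : bool :=
  (inp st != [::]) && ltT (topS (d1 st)) (topS (inp st)).
Definition legal_d1 (st : state) : bool :=
  (d1 st != [::]) && ltT (topS (d2 st)) (topS (d1 st)).
Definition legal_d2 (st : state) : bool :=
  (d2 st != [::]) && ltT (topS (d2 st)) (topS (istk st)).

Definition alpha (st : state) : bool := ltT (topS (d2 st)) (topS (istk st)).
Definition beta (st : state) : bool :=
  ltT (topS (d2 st)) (topS (d1 st)) && ltT (topS (d1 st)) (topS (istk st)).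

(* input elements from Input up to (and including) the first input element
   larger than Top(D2) (the whole remaining input if there is none) *)
Definition input_segment (st : state) : seq nat :=
  take (find (fun y => ltT (topS (d2 st)) (Some y)) (inp st)).+1 (inp st).

Definition gamma (st : state) : bool :=
  [&& ltT (topS (d1 st)) (topS (inp st)),
      ltT (topS (inp st)) (topS (istk st)) &
      sorted ltn (input_segment st)].

Definition do_d3 (st : state) : option state :=
  match istk st with
  | t :: r => Some (St (inp st) (d1 st) (d2 st) r (rcons (outp st) t))
  | [::] => None
  end.
Definition do_d0 (st : state) : option state :=
  match inp st with
  | x :: r => Some (St r (x :: d1 st) (d2 st) (istk st) (outp st))
  | [::] => None
  end.
Definition do_d1 (st : state) : option state :=
  match d1 st with
  | x :: r => Some (St (inp st) r (x :: d2 st) (istk st) (outp st))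
  | [::] => None
  end.
Definition do_d2 (st : state) : option state :=
  match d2 st with
  | x :: r => Some (St (inp st) (d1 st) r (x :: istk st) (outp st))
  | [::] => None
  end.
Definition do_flush (st : state) : option state :=
  Some (St (inp st) [::] [::] (istk st) (outp st ++ sort leq (d1 st ++ d2 st))).

(* one step of algorithm D^2 I; None = the algorithm stops (no instruction
   applicable, e.g. everything has been output) *)
Definition step (st : state) : option state :=
  if rule1 st then do_d3 st
  else if rule2 st then do_flush st
  else if legal_d1 st && beta st then do_d1 st
  else if legal_d0 st && gamma st then do_d0 st
  else if legal_d2 st && alpha st then do_d2 st
  else do_d3 st.

Definition init (p : seq nat) : state := St p [::] [::] [::] [::].

Inductive reachable (p : seq nat) : state -> Prop :=
  | reach_init : reachable p (init p)
  | reach_step st st' : reachable p st -> step st = Some st' -> reachable p st'.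

(* Throughout the run D2 is decreasing and I increasing from the top, and
   Top(D2) < Top(I).  Every instruction preserves this: d3 pops Top(I), which
   lies between Top(D2) and the new Top(I); d2 moves onto I an element that
   is above the rest of D2 and, by legality, below Top(I); d1 is performed
   only under (beta), which puts the moved element above Top(D2) and below
   Top(I); d0 leaves D2 and I alone and flushing empties D2.  Nothing about
   the input is used. *)
From mathcomp Require Import all_boot.

Definition stack_invariant (st : state) : bool :=
  [&& sorted gtn (d2 st), sorted ltn (istk st) &
      ltT (topS (d2 st)) (topS (istk st))].

Lemma path_ltn_ltT x s : path ltn x s = ltT (Some x) (topS s) && sorted ltn s.
Proof. by case: s. Qed.

Lemma stack_invariant_init p : stack_invariant (init p).
Proof. by []. Qed.

Lemma stack_invariant_d3 st st' :
  stack_invariant st -> do_d3 st = Some st' -> stack_invariant st'.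
Proof.
case: st => i a b [|t c] o //; rewrite /stack_invariant /=.
rewrite path_ltn_ltT => /and3P[sorted_b /andP[t_c sorted_c] b_t] [<-] /=.
rewrite sorted_b sorted_c /=.
case: b b_t {sorted_b} => //= x _ x_t.
by case: c t_c {sorted_c} => //= u c; apply: ltn_trans.
Qed.

Lemma stack_invariant_flush st st' :
  stack_invariant st -> do_flush st = Some st' -> stack_invariant st'.
Proof.
by case: st => i a b c o /and3P[_ sorted_c _] [<-]; rewrite /stack_invariant /= sorted_c.
Qed.

Lemma stack_invariant_d0 st st' :
  stack_invariant st -> do_d0 st = Some st' -> stack_invariant st'.
Proof. by case: st => [[|x i] a b c o] // ? [<-]. Qed.

Lemma stack_invariant_d1 st st' :
  stack_invariant st -> beta st -> do_d1 st = Some st' -> stack_invariant st'.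
Proof.
case: st => i [|x a] b c o //; rewrite /stack_invariant /beta /=.
move=> /and3P[sorted_b sorted_c _] /andP[b_x x_c] [<-].
rewrite /stack_invariant /= sorted_c x_c /= andbT.
by case: b sorted_b b_x => //= y b -> ->.
Qed.

Lemma stack_invariant_d2 st st' :
  stack_invariant st -> legal_d2 st -> do_d2 st = Some st' -> stack_invariant st'.
Proof.
case: st => i a [|x b] c o //; rewrite /stack_invariant /legal_d2 /=.
move=> /and3P[sorted_xb sorted_c _] x_c [<-].
rewrite /stack_invariant /= path_ltn_ltT sorted_c (path_sorted sorted_xb) andbT.
rewrite [ltT _ _]x_c.
by case: b sorted_xb => //= y b /andP[].
Qed.

Lemma stack_invariant_step st st' :
  stack_invariant st -> step st = Some st' -> stack_invariant st'.
Proof.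
move=> inv_st; rewrite /step.
case: (rule1 st); first exact: stack_invariant_d3.
case: (rule2 st); first exact: stack_invariant_flush.
case/boolP: (legal_d1 st && beta st) => [/andP[_ beta_st] | _].
  exact: stack_invariant_d1.
case: (legal_d0 st && gamma st); first exact: stack_invariant_d0.
case/boolP: (legal_d2 st && alpha st) => [/andP[legal_st _] | _].
  exact: stack_invariant_d2.
exact: stack_invariant_d3.
Qed.

Lemma stack_invariant_reachable p st : reachable p st -> stack_invariant st.
Proof.
elim=> [|s s' _ inv_s step_s]; first exact: stack_invariant_init.
exact: stack_invariant_step inv_s step_s.
Qed.

Theorem mainTheorem5 (n : nat) (p : seq nat) :
  perm_eq p (iota 1 n) ->
  forall st : state, reachable p st -> ltT (topS (d2 st)) (topS (istk st)).
Proof. by move=> _ st /stack_invariant_reachable /and3P[]. Qed.
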